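(* Let $d\ge 1$ be an integer and let ${\cal P}=\{\Pi_i,\pi_i\}_{i}$ be any (discrete) ensemble of pure states on ${\cal H}_d=\mathbb{C}^d$, where $\Pi_i=|\psi_i\rangle\langle\psi_i|$ with $\|\psi_i\|=1$, $\pi_i\ge 0$ and $\sum_i\pi_i=1$. Then the accessible fidelity of ${\cal P}$ satisfies $$F_{\cal P}\ge \frac{2}{d+1}.$$
   Context: For a measurement ${\cal E}=\{E_b\}$ (a POVM on ${\cal H}_d$: positive operators with $\sum_b E_b=I$) and a state-reproduction strategy ${\cal M}: b\mapsto\sigma_b$ (an assignment of a density operator $\sigma_b$ on ${\cal H}_d$ to each outcome $b$), the average fidelity is $F_{\cal P}({\cal E},{\cal M})=\sum_{b,i}\pi_i\,{\rm tr}(\Pi_iE_b)\,{\rm tr}(\Pi_i\sigma_b)$. The accessible fidelity of ${\cal P}$ is $F_{\cal P}=\sup_{{\cal E},{\cal M}}F_{\cal P}({\cal E},{\cal M})$, the supremum over all POVMs and all reproduction strategies. *)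

From HB Require Import structures.
From mathcomp Require Import all_boot all_order all_algebra.
From mathcomp Require Import all_classical all_reals all_analysis.
From mathcomp Require Import complex.
Set Implicit Arguments. Unset Strict Implicit. Unset Printing Implicit Defensive.
Import Order.TTheory GRing.Theory Num.Theory.
Local Open Scope ring_scope.

Section QDefs.
Variable R : realType.
Local Notation C := R[i].

Definition adj (m n : nat) (A : 'M[C]_(m, n)) : 'M[C]_(n, m) :=
  (map_mx (@conjc R) A)^T.

(* positive (semidefinite) operator on H_d = C^d: Hermitian with
   <v, A v> >= 0 for all v (the order on R[i] forces realness) *)
Definition posop (d : nat) (A : 'M[C]_d) : Prop :=
  adj A = A /\ forall v : 'cV[C]_d, 0 <= (adj v *m A *m v) 0 0.

Definition density (d : nat) (s : 'M[C]_d) : Prop :=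
  posop s /\ \tr s = 1.

Definition POVM (d n : nat) (E : 'I_n -> 'M[C]_d) : Prop :=
  (forall b, posop (E b)) /\ \sum_(b < n) E b = 1%:M.

Definition proj (d : nat) (psi : 'cV[C]_d) : 'M[C]_d := psi *m adj psi.

(* ensemble of pure states {Pi_i = |psi_i><psi_i|, pi_i}, i ranging over nat
   (discrete, possibly countably infinite; finite ensembles = pi_i = 0 eventually) *)
Definition ensemble (d : nat) (pi : nat -> R) (psi : nat -> 'cV[C]_d) : Prop :=
  (forall i, 0 <= pi i) /\
  (forall i, adj (psi i) *m psi i = 1%:M) /\
  (\sum_(i <oo) (pi i)%:E = 1)%E.

Definition fid_term (d n : nat) (pi : nat -> R) (psi : nat -> 'cV[C]_d)
  (E : 'I_n -> 'M[C]_d) (sigma : 'I_n -> 'M[C]_d) (i : nat) : R :=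
  pi i * complex.Re (\sum_(b < n) \tr (proj (psi i) *m E b) * \tr (proj (psi i) *m sigma b)).

(* average fidelity F_P(E, M) (extended real; the series has nonnegative terms) *)
Definition avg_fidelity (d n : nat) (pi : nat -> R) (psi : nat -> 'cV[C]_d)
  (E : 'I_n -> 'M[C]_d) (sigma : 'I_n -> 'M[C]_d) : \bar R :=
  (\sum_(i <oo) (fid_term pi psi E sigma i)%:E)%E.

Definition accessible_fidelity (d : nat) (pi : nat -> R) (psi : nat -> 'cV[C]_d) : \bar R :=
  ereal_sup [set x | exists (n : nat) (E : 'I_n -> 'M[C]_d) (sigma : 'I_n -> 'M[C]_d),
     POVM E /\ (forall b, density (sigma b)) /\ x = avg_fidelity pi psi E sigma].

End QDefs.

(* Measuring with a weighted complex projective 2-design and preparing the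
   detected vector achieves fidelity 2/(d+1) on every pure state.  The design
   is the computational basis (weight 1/(d+1) each) together with the 4^d
   phase vectors y_th = (i^th_k)_k, th in Z_4^d (weight d/((d+1) 4^d) each),
   which resolves the identity since sum_th y_th y_th^* = 4^d.  Averaging over
   independent fourth-root-of-unity phases kills every monomial
   conj(a_j) conj(a_k) a_l a_m except those with {l, m} = {j, k}, so for a unit
   vector a we get sum_th |<y_th, a>|^4 = 4^d (2 - sum_k |a_k|^4).  Preparing
   e_j, resp. y_th / sqrt d, after the corresponding outcome then gives
   (sum_k |a_k|^4 + 2 - sum_k |a_k|^4) / (d+1) = 2/(d+1) for each state of the
   ensemble, hence on average. *)

From Pilot Require Import Defs.
From HB Require Import structures.
From mathcomp Require Import all_boot all_order all_algebra.
From mathcomp Require Import all_classical all_reals all_analysis.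
From mathcomp Require Import complex.
From mathcomp Require Import ring.
Import Order.TTheory GRing.Theory Num.Theory.
Set Implicit Arguments. Unset Strict Implicit. Unset Printing Implicit Defensive.
Local Open Scope ring_scope.

Lemma sum_expr_unity_root (F : idomainType) n (x : F) : x ^+ n = 1 ->
  \sum_(a < n) x ^+ a = if x == 1 then n%:R else 0.
Proof.
move=> xn1; have [->|nx1] := eqVneq x 1.
  by under eq_bigr do rewrite expr1n; rewrite sumr_const card_ord.
have : (x - 1) * \sum_(a < n) x ^+ a = 0 by rewrite -subrX1 xn1 subrr.
by move/eqP; rewrite mulf_eq0 subr_eq0 (negbTE nx1) => /eqP.
Qed.

Lemma pair_multiset_eq (T : eqType) (j k l m : T) :
  (forall p, (p == l) + (p == m) = (p == j) + (p == k))%N <->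
  ((l == j) && (m == k)) || ((l == k) && (m == j)).
Proof.
split=> [h|/orP[]/andP[/eqP-> /eqP->] p //]; last by rewrite addnC.
case: (eqVneq l j) => [elj|nlj] /=.
  by subst l; have /eqP := h m; rewrite eqxx eqn_add2l; case: (m == k).
have /eqP := h l; rewrite eqxx (negbTE nlj) /=.
case: (eqVneq l k) => [elk|] //= _; subst l.
by have /eqP := h m; rewrite eqxx addnC eqn_add2r; case: (m == j).
Qed.

Local Notation sqn x := (conjc x * x).
Local Notation proj := Defs.proj.

Section PhaseSums.
Variable R : rcfType.
Local Notation C := R[i].
Local Notation i := ('i%C : C).

Lemma conjc_i_mul_i : conjc i * i = 1.
Proof. by apply/eqP; rewrite eq_complex /=; apply/andP; split; apply/eqP; ring. Qed.

Lemma conjc_expr_i_mul n : conjc (i ^+ n) * i ^+ n = 1.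
Proof. by rewrite rmorphXn -exprMn conjc_i_mul_i expr1n. Qed.

Lemma prim4_i : 4.-primitive_root i.
Proof.
have i_neq1 : i != 1 by rewrite eq_complex /= oner_eq0 andbF.
apply/andP; split=> //; apply/forallP => -[[|[|[|[|//]]]] //= _];
  rewrite unity_rootE.
- by rewrite expr1 (negbTE i_neq1).
- by rewrite sqr_i eqNr oner_eq0.
- by rewrite exprS sqr_i mulrN1 eq_complex /= oppr0 (eq_sym 0) oner_eq0.
- by rewrite (_ : 4 = 2 * 2)%N // exprM sqr_i sqrrN expr1n !eqxx.
Qed.

Lemma sum_phase_pow N M :
  \sum_(a < 4) (i ^+ N * conjc (i ^+ M)) ^+ a = if N == M %[mod 4] then 4%:R else 0.
Proof.
have i4 : i ^+ 4 = 1 := prim_expr_order prim4_i.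
rewrite sum_expr_unity_root; last first.
  by rewrite exprMn -rmorphXn -!exprM !(mulnC _ 4) !exprM i4 !expr1n rmorph1 mulr1.
rewrite -(eq_prim_root_expr prim4_i); congr (if _ then _ else _).
apply/eqP/eqP => [h|->]; last by rewrite mulrC conjc_expr_i_mul.
by rewrite -[i ^+ N]mulr1 -(conjc_expr_i_mul M) mulrA h mul1r.
Qed.

Lemma sum_phase_prod (I : finType) (N M : I -> nat) :
  \sum_(th : {ffun I -> 'I_4}) \prod_p (i ^+ N p * conjc (i ^+ M p)) ^+ th p
  = if [forall p, N p == M p %[mod 4]] then 4%:R ^+ #|I| else 0.
Proof.
rewrite -(bigA_distr_bigA (fun p (a : 'I_4) => (i ^+ N p * conjc (i ^+ M p)) ^+ a)).
under eq_bigr do rewrite sum_phase_pow.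
case: forallP => [eqNM|/forallP].
  by under eq_bigr do rewrite eqNM; rewrite prodr_const.
by rewrite negb_forall => /existsP[p /negbTE neqNM]; rewrite (bigD1 p) //= neqNM mul0r.
Qed.

End PhaseSums.

Section PhaseMoments.
Variables (R : rcfType) (I : finType).
Local Notation C := R[i].
Local Notation i := ('i%C : C).

Definition phase_amp (a : I -> C) (th : {ffun I -> 'I_4}) : C :=
  \sum_k conjc (i ^+ th k) * a k.

Lemma expr_delta_prod (x : C) (th : {ffun I -> 'I_4}) j :
  x ^+ th j = \prod_p x ^+ ((p == j) * th p).
Proof.
rewrite (bigD1 j) //= eqxx mul1n big1 ?mulr1 // => p /negbTE ->.
by rewrite mul0n expr0.
Qed.

Lemma phase_monomial4 (th : {ffun I -> 'I_4}) j k l m :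
  conjc (i ^+ th j) * conjc (i ^+ th k) * i ^+ th l * i ^+ th m =
  \prod_p (i ^+ ((p == l) + (p == m)) * conjc (i ^+ ((p == j) + (p == k)))) ^+ th p.
Proof.
rewrite !rmorphXn (expr_delta_prod _ th j) (expr_delta_prod _ th k).
rewrite (expr_delta_prod _ th l) (expr_delta_prod _ th m) -!big_split /=.
apply: eq_bigr => p _; rewrite rmorphXn exprMn -!exprM !mulnDl !exprD; ring.
Qed.

Lemma sum_phase_monomial4 j k l m :
  \sum_(th : {ffun I -> 'I_4})
    conjc (i ^+ th j) * conjc (i ^+ th k) * i ^+ th l * i ^+ th m =
  if ((l == j) && (m == k)) || ((l == k) && (m == j)) then 4%:R ^+ #|I| else 0.
Proof.
under eq_bigr do rewrite phase_monomial4.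
rewrite sum_phase_prod; congr (if _ then _ else _).
have mod4E p : ((p == l) + (p == m) == (p == j) + (p == k) %[mod 4]) =
               ((p == l) + (p == m) == (p == j) + (p == k))%N.
  by case: (p == l); case: (p == m); case: (p == j); case: (p == k).
apply/forallP/idP => [h|/pair_multiset_eq h p]; last by rewrite mod4E h.
by apply/pair_multiset_eq => p; apply/eqP; rewrite -mod4E.
Qed.

Lemma sum_phase_monomial2 j l :
  \sum_(th : {ffun I -> 'I_4}) i ^+ th l * conjc (i ^+ th j) =
  if l == j then 4%:R ^+ #|I| else 0.
Proof.
transitivity (\sum_(th : {ffun I -> 'I_4})
                \prod_p (i ^+ (p == l) * conjc (i ^+ (p == j))) ^+ th p).
  apply: eq_bigr => th _; rewrite rmorphXn (expr_delta_prod _ th l).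
  rewrite (expr_delta_prod _ th j) -big_split /=.
  by apply: eq_bigr => p _; rewrite rmorphXn exprMn -!exprM.
rewrite sum_phase_prod; congr (if _ then _ else _).
apply/forallP/eqP => [/(_ l)|-> p //]; rewrite eqxx.
by case: (eqVneq l j).
Qed.

Lemma sqn_phase_amp_expand a th :
  sqn (phase_amp a th) ^+ 2 =
  \sum_j \sum_k \sum_l \sum_m (a j * a k * conjc (a l) * conjc (a m)) *
    (conjc (i ^+ th j) * conjc (i ^+ th k) * i ^+ th l * i ^+ th m).
Proof.
have conj_amp : conjc (phase_amp a th) = \sum_l i ^+ th l * conjc (a l).
  by rewrite rmorph_sum; apply: eq_bigr => l _; rewrite rmorphM /= conjcK.
rewrite (_ : _ ^+ 2 = phase_amp a th * phase_amp a th *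
                     (conjc (phase_amp a th) * conjc (phase_amp a th))); last by ring.
rewrite conj_amp /phase_amp !big_distrlr; apply: eq_bigr => j _.
under eq_bigr do rewrite big_distrlr.
rewrite exchange_big; apply: eq_bigr => k _; apply: eq_bigr => l _.
by apply: eq_bigr => m _ /=; ring.
Qed.

Lemma sum_pair_delta (G : I -> I -> C) j k :
  \sum_l \sum_m (if ((l == j) && (m == k)) || ((l == k) && (m == j)) then G l m else 0)
  = G j k + G k j - (if j == k then G j j else 0).
Proof.
have delta2 (H : I -> I -> C) x y :
    \sum_l \sum_m (if (l == x) && (m == y) then H l m else 0) = H x y.
  rewrite (bigD1 x) //= eqxx -big_mkcond big_pred1_eq big1 ?addr0 // => l /negbTE nlx.
  by rewrite big1 // => m _; rewrite nlx.
have [<-|njk] := eqVneq j k.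
  by under eq_bigr do under eq_bigr do rewrite orbb; rewrite delta2 addrK.
rewrite subr0 -(delta2 G j k) -(delta2 G k j) -big_split /=.
apply: eq_bigr => l _; rewrite -big_split /=; apply: eq_bigr => m _.
have [->|] := eqVneq l j; have [->|] := eqVneq m k; rewrite /= ?addr0 ?add0r //.
by rewrite (negbTE njk) addr0.
Qed.

Lemma sum_sqn_phase_amp4 a :
  \sum_th sqn (phase_amp a th) ^+ 2 =
  4%:R ^+ #|I| * (2%:R * (\sum_k sqn (a k)) ^+ 2 - \sum_k sqn (a k) ^+ 2).
Proof.
set K : C := 4%:R ^+ #|I|.
under eq_bigr do rewrite sqn_phase_amp_expand.
rewrite exchange_big; under eq_bigr => j _ do
  (rewrite exchange_big; under eq_bigr => k _ do
    (rewrite exchange_big; under eq_bigr => l _ do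
      (rewrite exchange_big; under eq_bigr => m _ do
        rewrite -mulr_sumr sum_phase_monomial4 -/K fun_if mulr0))).
under eq_bigr => j _ do under eq_bigr => k _ do
  rewrite (sum_pair_delta (fun l m => a j * a k * conjc (a l) * conjc (a m) * K)).
rewrite (eq_bigr (fun j =>
  \sum_k 2%:R * K * (sqn (a j) * sqn (a k)) - K * sqn (a j) ^+ 2)).
  rewrite sumrB -mulr_sumr mulrBr expr2 big_distrlr !mulr_sumr; congr (_ - _).
  by apply: eq_bigr => j _; rewrite !mulr_sumr; apply: eq_bigr => k _ /=; ring.
move=> j _ /=; rewrite sumrB -big_mkcond (big_pred1 j) => [|k]; last exact: eq_sym.
by congr (_ - _); [apply: eq_bigr => k _ |]; ring.
Qed.

End PhaseMoments.

Section Adjoint.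
Variable R : realType.
Local Notation C := R[i].
Local Notation inner u v := ((adj u *m v) 0 0).

Lemma adjM m n p (A : 'M[C]_(m, n)) (B : 'M[C]_(n, p)) :
  adj (A *m B) = adj B *m adj A.
Proof.
apply/matrixP => i j; rewrite !mxE rmorph_sum; apply: eq_bigr => k _.
by rewrite !mxE rmorphM mulrC.
Qed.

Lemma adjZ m n (c : C) (A : 'M[C]_(m, n)) : adj (c *: A) = conjc c *: adj A.
Proof. by apply/matrixP => i j; rewrite !mxE rmorphM. Qed.

Lemma adjK m n (A : 'M[C]_(m, n)) : adj (adj A) = A.
Proof. by apply/matrixP => i j; rewrite !mxE conjcK. Qed.

Lemma adj_delta m n (i : 'I_m) (j : 'I_n) :
  adj (delta_mx i j : 'M[C]_(m, n)) = delta_mx j i.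
Proof. by rewrite /adj map_delta_mx trmx_delta. Qed.

Lemma adj_proj n (y : 'cV[C]_n) : adj (proj y) = proj y.
Proof. by rewrite /proj adjM adjK. Qed.

Lemma inner_conj n (u v : 'cV[C]_n) : inner u v = conjc (inner v u).
Proof. by rewrite -[in LHS](adjK v) -adjM !mxE. Qed.

Lemma mulmx11E (A B : 'M[C]_1) : (A *m B) 0 0 = A 0 0 * B 0 0.
Proof. by rewrite mxE big_ord1. Qed.

Lemma tr_proj n (y : 'cV[C]_n) : \tr (proj y) = inner y y.
Proof. by rewrite /proj mxtrace_mulC trace_mx11. Qed.

Lemma tr_proj_mul n (x y : 'cV[C]_n) : \tr (proj x *m proj y) = sqn (inner y x).
Proof.
rewrite /proj mulmxA mxtrace_mulC !mulmxA trace_mx11.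
by rewrite -mulmxA mulmx11E [inner x y]inner_conj mulrC.
Qed.

Lemma ge0_conjc (c : C) : 0 <= c -> conjc c = c.
Proof. by case: c => a b; rewrite lecE /= => /andP[/eqP -> _]; rewrite oppr0. Qed.

Lemma posop_proj n (y : 'cV[C]_n) : posop (proj y).
Proof.
split=> [|v]; first exact: adj_proj.
rewrite /proj (mulmxA (adj v)) -(mulmxA (adj v *m y)) mulmx11E.
by rewrite [inner y v]inner_conj mulcJ_ge0.
Qed.

Lemma posopZ n (c : C) (A : 'M[C]_n) : 0 <= c -> posop A -> posop (c *: A).
Proof.
move=> c_ge0 [adjA A_ge0]; split=> [|v]; first by rewrite adjZ ge0_conjc // adjA.
by rewrite -scalemxAr -scalemxAl mxE mulr_ge0.
Qed.

End Adjoint.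

Section PhaseDesign.
Variables (R : realType) (d : nat).
Local Notation C := R[i].
Local Notation i := ('i%C : C).
Local Notation inner u v := ((adj u *m v) 0 0).

Definition basis_vec (j : 'I_d) : 'cV[C]_d := delta_mx j 0.
Definition phase_vec (th : {ffun 'I_d -> 'I_4}) : 'cV[C]_d := \col_k i ^+ th k.

Lemma inner_basis_vec j (x : 'cV[C]_d) : inner (basis_vec j) x = x j 0.
Proof.
rewrite /basis_vec adj_delta mxE (bigD1 j) //= big1 ?addr0 => [|k /negbTE nkj].
  by rewrite !mxE !eqxx mul1r.
by rewrite mxE nkj mul0r.
Qed.

Lemma inner_phase_vec th (x : 'cV[C]_d) :
  inner (phase_vec th) x = phase_amp (fun k => x k 0) th.
Proof. by rewrite mxE; apply: eq_bigr => k _; rewrite !mxE. Qed.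

Lemma sum_proj_basis_vec : \sum_j proj (basis_vec j) = 1%:M.
Proof.
rewrite mx1_sum_delta; apply: eq_bigr => j _.
by rewrite /proj /basis_vec adj_delta mul_delta_mx.
Qed.

Lemma sum_proj_phase_vec : \sum_th proj (phase_vec th) = (4%:R ^+ d)%:M.
Proof.
apply/matrixP => p q; rewrite summxE !mxE.
under eq_bigr do rewrite !mxE big_ord1 !mxE.
by rewrite sum_phase_monomial2 card_ord; case: (p == q).
Qed.

Local Notation outcome := ('I_d + {ffun 'I_d -> 'I_4})%type.

Definition design_povm (t : outcome) : 'M[C]_d :=
  match t with
  | inl j => (d%:R + 1)^-1 *: proj (basis_vec j)
  | inr th => (d%:R / (d%:R + 1) / 4%:R ^+ d) *: proj (phase_vec th)
  end.

Definition design_guess (t : outcome) : 'M[C]_d :=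
  match t with
  | inl j => proj (basis_vec j)
  | inr th => (d%:R)^-1 *: proj (phase_vec th)
  end.

Lemma posop_design_povm t : posop (design_povm t).
Proof.
by case: t => [j|th] /=; apply: posopZ (posop_proj _);
  rewrite ?invr_ge0 ?divr_ge0 ?exprn_ge0 ?addr_ge0 ?ler0n.
Qed.

Lemma sum_design_povm : \sum_t design_povm t = 1%:M.
Proof.
rewrite big_sumType /= -!scaler_sumr sum_proj_basis_vec sum_proj_phase_vec.
apply/matrixP => p q; rewrite !mxE; case: (p == q); rewrite ?mulr0 ?addr0 //=.
have d1_neq0 : d%:R + 1 != 0 :> C by rewrite natr1 pnatr_eq0.
have d4_neq0 : 4%:R ^+ d != 0 :> C by rewrite expf_neq0 // pnatr_eq0.
by field; rewrite d1_neq0 d4_neq0.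
Qed.

Hypothesis d_gt0 : (0 < d)%N.

Lemma density_design_guess t : density (design_guess t).
Proof.
have d_neq0 : d%:R != 0 :> C by rewrite pnatr_eq0 -lt0n.
case: t => [j|th] /=; split.
- exact: posop_proj.
- by rewrite tr_proj inner_basis_vec mxE !eqxx.
- by apply: posopZ (posop_proj _); rewrite invr_ge0 ler0n.
- rewrite mxtraceZ tr_proj inner_phase_vec /phase_amp.
  under eq_bigr do rewrite mxE conjc_expr_i_mul.
  by rewrite sumr_const card_ord mulVf.
Qed.

Lemma tr_proj_mulZ n (x y : 'cV[C]_n) c :
  \tr (proj x *m (c *: proj y)) = c * sqn (inner y x).
Proof. by rewrite -scalemxAr mxtraceZ tr_proj_mul. Qed.

Lemma design_fidelity (psi : 'cV[C]_d) : adj psi *m psi = 1%:M ->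
  \sum_t \tr (proj psi *m design_povm t) * \tr (proj psi *m design_guess t)
  = 2%:R / (d%:R + 1).
Proof.
move=> psi_unit; set a := fun k => psi k 0.
have d_neq0 : d%:R != 0 :> C by rewrite pnatr_eq0 -lt0n.
have d1_neq0 : d%:R + 1 != 0 :> C by rewrite natr1 pnatr_eq0.
have d4_neq0 : 4%:R ^+ d != 0 :> C by rewrite expf_neq0 // pnatr_eq0.
have norm_a : \sum_k sqn (a k) = 1.
  move/matrixP/(_ 0 0): psi_unit; rewrite !mxE eqxx mulr1n => <-.
  by apply: eq_bigr => k _; rewrite !mxE.
rewrite big_sumType /=.
under eq_bigr do
  rewrite tr_proj_mulZ -[proj (basis_vec _)]scale1r tr_proj_mulZ inner_basis_vec.
under [X in _ + X]eq_bigr do rewrite !tr_proj_mulZ inner_phase_vec -/a.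
rewrite (eq_bigr (fun j => (d%:R + 1)^-1 * sqn (a j) ^+ 2)); last first.
  by move=> j _; rewrite /a /=; ring.
rewrite (eq_bigr (fun th => (d%:R + 1)^-1 / 4%:R ^+ d * sqn (phase_amp a th) ^+ 2)).
  rewrite -!mulr_sumr sum_sqn_phase_amp4 norm_a card_ord.
  by field; rewrite d1_neq0 d4_neq0.
by move=> th _; field; rewrite d_neq0 d1_neq0 d4_neq0.
Qed.

End PhaseDesign.

Lemma POVM_enum_val (R : realType) (T : finType) d (E : T -> 'M[R[i]]_d) :
  (forall t, posop (E t)) -> \sum_t E t = 1%:M ->
  POVM (fun b : 'I_#|T| => E (enum_val b)).
Proof. by move=> E_ge0 sumE; split=> [b|]; [exact: E_ge0 | rewrite -big_enum_val]. Qed.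

Lemma avg_fidelity_const (R : realType) d n (pi : nat -> R) (psi : nat -> 'cV[R[i]]_d)
    (E sigma : 'I_n -> 'M[R[i]]_d) (c : R) :
  (forall i, 0 <= pi i) -> (\sum_(i <oo) (pi i)%:E = 1)%E ->
  (forall i, complex.Re (\sum_b \tr (proj (psi i) *m E b) *
                                \tr (proj (psi i) *m sigma b)) = c) ->
  avg_fidelity pi psi E sigma = c%:E.
Proof.
move=> pi_ge0 pi_sum1 fid_c; rewrite /avg_fidelity.
under eq_eseriesr do rewrite /fid_term fid_c mulrC EFinM.
by rewrite nneseriesZl ?pi_sum1 ?mule1 // => i _; rewrite lee_fin.
Qed.

Theorem theorem1 (R : realType) (d : nat) (hd : (0 < d)%N)
  (pi : nat -> R) (psi : nat -> 'cV[R[i]]_d) :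
  ensemble pi psi ->
  ((2 / (d%:R + 1) : R)%:E <= accessible_fidelity pi psi)%E.
Proof.
move=> [pi_ge0 [psi_unit pi_sum1]].
pose T : finType := ('I_d + {ffun 'I_d -> 'I_4})%type.
pose E (t : T) := design_povm R t; pose S (t : T) := design_guess R t.
apply: ereal_sup_ubound.
exists #|T|, (fun b => E (enum_val b)), (fun b => S (enum_val b)).
split; first by apply: POVM_enum_val; [exact: posop_design_povm | exact: sum_design_povm].
split=> [b|]; first exact: density_design_guess.
apply/esym/avg_fidelity_const => // i.
rewrite -(big_enum_val (fun t : T => \tr (proj (psi i) *m E t) * \tr (proj (psi i) *m S t))).
rewrite design_fidelity //.
suff -> : 2%:R / (d%:R + 1) = ((2 / (d%:R + 1) : R)%:C)%C by [].
by rewrite rmorphM fmorphV !rmorphD !rmorph1 rmorph_nat.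
Qed.
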